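(* (Progress for $\lambda_{\mathrm{act}}$ terms.) Assume $\Gamma$ is either empty or only contains entries of the form $a_i : \mathsf{ActorRef}(A_i)$ (for names $a_i$). If $\Gamma \mid B \vdash M : A$, then either: (1) $M = \mathbf{return}\ V$ for some value $V$; or (2) $M$ can be written as $E[M']$ for an evaluation context $E$, where $M'$ is a communication or concurrency primitive, i.e. of the form $\mathbf{spawn}\ N$, $\mathbf{send}\ V\ W$, $\mathbf{receive}$, or $\mathbf{self}$; or (3) there exists some $M'$ such that $M \longrightarrow_{\mathsf{M}} M'$.
   Context: The calculus $\lambda_{\mathrm{act}}$. Types: $A,B,C ::= \mathbf{1} \mid A \xrightarrow{C} B \mid \mathsf{ActorRef}(A)$. $\alpha$ ranges over variables $x$ and names $a$. Values $V,W ::= \alpha \mid \lambda x.M \mid ()$. Computations $M,N ::= V\,W \mid \mathbf{let}\ x \Leftarrow M\ \mathbf{in}\ N \mid \mathbf{return}\ V \mid \mathbf{spawn}\ M \mid \mathbf{send}\ V\ W \mid \mathbf{receive} \mid \mathbf{self}$. Value typing $\Gamma\vdash V:A$: $\Gamma\vdash\alpha:A$ if $\alpha:A\in\Gamma$; $\Gamma\vdash\lambda x.M : A\xrightarrow{C}B$ if $\Gamma,x:A\mid C\vdash M:B$; $\Gamma\vdash():\mathbf 1$. Computation typing $\Gamma\mid C\vdash M:A$ ($C$ is the mailbox type): $\Gamma\mid C\vdash V\,W:B$ if $\Gamma\vdash V:A\xrightarrow{C}B$ and $\Gamma\vdash W:A$; $\Gamma\mid C\vdash\mathbf{let}\ x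 \Leftarrow M\ \mathbf{in}\ N : B$ if $\Gamma\mid C\vdash M:A$ and $\Gamma,x:A\mid C\vdash N:B$; $\Gamma\mid C\vdash \mathbf{return}\ V:A$ if $\Gamma\vdash V:A$; $\Gamma\mid C\vdash\mathbf{send}\ V\ W:\mathbf 1$ if $\Gamma\vdash V:A$ and $\Gamma\vdash W:\mathsf{ActorRef}(A)$; $\Gamma\mid A\vdash\mathbf{receive}:A$; $\Gamma\mid C\vdash\mathbf{spawn}\ M:\mathsf{ActorRef}(A)$ if $\Gamma\mid A\vdash M:\mathbf 1$; $\Gamma\mid A\vdash\mathbf{self}:\mathsf{ActorRef}(A)$. Evaluation contexts $E ::= [\,] \mid \mathbf{let}\ x \Leftarrow E\ \mathbf{in}\ M$. Term reduction $\longrightarrow_{\mathsf{M}}$: $(\lambda x.M)V\longrightarrow_{\mathsf{M}} M\{V/x\}$; $\mathbf{let}\ x \Leftarrow \mathbf{return}\ V\ \mathbf{in}\ M \longrightarrow_{\mathsf{M}} M\{V/x\}$; $E[M]\longrightarrow_{\mathsf{M}} E[M']$ if $M\longrightarrow_{\mathsf{M}} M'$. *)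

From Stdlib Require Import List String.
Import ListNotations.

Inductive ty : Type :=
| TUnit : ty
| TFun : ty -> ty -> ty -> ty        (* TFun A C B  =  A -C-> B *)
| TActorRef : ty -> ty.

Inductive atom : Type :=
| AVar : string -> atom
| AName : string -> atom.

Inductive val : Type :=
| VAtom : atom -> val
| VLam : string -> comp -> val
| VUnit : val
with comp : Type :=
| CApp : val -> val -> comp
| CLet : string -> comp -> comp -> comp
| CReturn : val -> comp
| CSpawn : comp -> comp
| CSend : val -> val -> comp
| CReceive : comp
| CSelf : comp.

Definition atom_eqb (a b : atom) : bool :=
  match a, b with
  | AVar x, AVar y => String.eqb x y
  | AName x, AName y => String.eqb x y
  | _, _ => false
  end.

(* Type environments: lists of entries alpha : A; the leftmost (most recent)
   binding of an atom is the one that counts. *)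
Definition env := list (atom * ty).

Fixpoint lookup (G : env) (a : atom) : option ty :=
  match G with
  | [] => None
  | (b, A) :: G' => if atom_eqb a b then Some A else lookup G' a
  end.

Definition extend (G : env) (x : string) (A : ty) : env := (AVar x, A) :: G.

Inductive val_typ : env -> val -> ty -> Prop :=
| T_Atom : forall G a A, lookup G a = Some A -> val_typ G (VAtom a) A
| T_Lam : forall G x M A C B,
    comp_typ (extend G x A) C M B -> val_typ G (VLam x M) (TFun A C B)
| T_Unit : forall G, val_typ G VUnit TUnit
(* comp_typ G C M A  :  G | C |- M : A *)
with comp_typ : env -> ty -> comp -> ty -> Prop :=
| T_App : forall G C V W A B,
    val_typ G V (TFun A C B) -> val_typ G W A -> comp_typ G C (CApp V W) B
| T_Let : forall G C x M N A B,
    comp_typ G C M A -> comp_typ (extend G x A) C N B ->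
    comp_typ G C (CLet x M N) B
| T_Return : forall G C V A, val_typ G V A -> comp_typ G C (CReturn V) A
| T_Send : forall G C V W A,
    val_typ G V A -> val_typ G W (TActorRef A) -> comp_typ G C (CSend V W) TUnit
| T_Receive : forall G A, comp_typ G A CReceive A
| T_Spawn : forall G C M A,
    comp_typ G A M TUnit -> comp_typ G C (CSpawn M) (TActorRef A)
| T_Self : forall G A, comp_typ G A CSelf (TActorRef A).

Fixpoint subst_val (V : val) (x : string) (U : val) : val :=
  match U with
  | VAtom (AVar y) => if String.eqb x y then V else U
  | VAtom (AName _) => U
  | VLam y M => if String.eqb x y then U else VLam y (subst_comp V x M)
  | VUnit => VUnit
  end
with subst_comp (V : val) (x : string) (M : comp) : comp :=
  match M with
  | CApp U W => CApp (subst_val V x U) (subst_val V x W)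
  | CLet y M1 M2 =>
      CLet y (subst_comp V x M1)
           (if String.eqb x y then M2 else subst_comp V x M2)
  | CReturn U => CReturn (subst_val V x U)
  | CSpawn N => CSpawn (subst_comp V x N)
  | CSend U W => CSend (subst_val V x U) (subst_val V x W)
  | CReceive => CReceive
  | CSelf => CSelf
  end.

Inductive ectx : Type :=
| EHole : ectx
| ELet : string -> ectx -> comp -> ectx.

Fixpoint plug (E : ectx) (M : comp) : comp :=
  match E with
  | EHole => M
  | ELet x E' N => CLet x (plug E' M) N
  end.

Inductive step_M : comp -> comp -> Prop :=
| S_Beta : forall x M V, step_M (CApp (VLam x M) V) (subst_comp V x M)
| S_Let : forall x V M, step_M (CLet x (CReturn V) M) (subst_comp V x M)
| S_Ctx : forall E M M', step_M M M' -> step_M (plug E M) (plug E M').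

Definition is_primitive (M : comp) : Prop :=
  (exists N, M = CSpawn N) \/ (exists V W, M = CSend V W) \/
  M = CReceive \/ M = CSelf.

Definition names_only_env (G : env) : Prop :=
  forall p, In p G -> exists a A, p = (AName a, TActorRef A).

(* In an environment holding only names of
   actor-reference type, the only values of function type are abstractions, so
   an application beta-reduces; a let either reduces or inherits, through the
   context [let x <= E in N], the primitive its head is blocked on. *)

From Stdlib Require Import List String.

Definition blocked_on_primitive (M : comp) : Prop :=
  exists (E : ectx) (M' : comp), M = plug E M' /\ is_primitive M'.

Lemma lookup_In (G : env) (a : atom) (T : ty) :
  lookup G a = Some T -> exists b, In (b, T) G.
Proof.
  induction G as [|[b U] G IH]; simpl; [discriminate|].
  destruct (atom_eqb a b); intros Hl.
  - injection Hl as <-. exists b. now left.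
  - destruct (IH Hl) as [c Hc]. exists c. now right.
Qed.

Lemma names_only_lookup (G : env) (a : atom) (T : ty) :
  names_only_env G -> lookup G a = Some T -> exists A, T = TActorRef A.
Proof.
  intros HG Hl. destruct (lookup_In _ _ _ Hl) as [b Hb].
  destruct (HG _ Hb) as [c [A Heq]]. injection Heq as _ ->. now exists A.
Qed.

Lemma names_only_fun_lam (G : env) (V : val) (A C B : ty) :
  names_only_env G -> val_typ G V (TFun A C B) -> exists x M, V = VLam x M.
Proof.
  intros HG HV. inversion HV; subst.
  - destruct (names_only_lookup _ _ _ HG H) as [A' Heq]. discriminate.
  - eauto.
Qed.

Lemma primitive_blocked (M : comp) : is_primitive M -> blocked_on_primitive M.
Proof. intros HP. now exists EHole, M. Qed.

Lemma let_blocked (x : string) (M N : comp) :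
  blocked_on_primitive M -> blocked_on_primitive (CLet x M N).
Proof.
  intros [E [M' [-> HP]]]. now exists (ELet x E N), M'.
Qed.

Lemma step_M_let (x : string) (M M' N : comp) :
  step_M M M' -> step_M (CLet x M N) (CLet x M' N).
Proof. exact (S_Ctx (ELet x EHole N) M M'). Qed.

Theorem lemma10 (G : env) (B : ty) (M : comp) (A : ty) :
  names_only_env G ->
  comp_typ G B M A ->
  (exists V, M = CReturn V) \/
  (exists (E : ectx) (M' : comp), M = plug E M' /\ is_primitive M') \/
  (exists M', step_M M M').
Proof.
  intros HG H.
  induction H as [G C V W A' B' HV _ | G C x M N A' B' _ IHM _ _ | G C V A'
                 | G C V W A' | G A' | G C M A' _ _ | G A'].
  - destruct (names_only_fun_lam _ _ _ _ _ HG HV) as [x [M ->]].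
    right; right. eexists. apply S_Beta.
  - destruct (IHM HG) as [[V ->] | [Hblocked | [M' Hstep]]].
    + right; right. eexists. apply S_Let.
    + right; left. exact (let_blocked x M N Hblocked).
    + right; right. exists (CLet x M' N). now apply step_M_let.
  - left. eauto.
  - right; left. apply (primitive_blocked (CSend V W)). right; left. eauto.
  - right; left. apply (primitive_blocked CReceive). right; right; left. reflexivity.
  - right; left. apply (primitive_blocked (CSpawn M)). left. eauto.
  - right; left. apply (primitive_blocked CSelf). right; right; right. reflexivity.
Qed.
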